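(* Let $(f_n):\underline G=(G_n,p_n)\to\underline H=(H_n,q_n)$ be a level morphism of inverse sequences of groups such that the induced homomorphism $\tilde f:\varprojlim\underline G\to\varprojlim\underline H$, $\tilde f((g_n))=(f_n(g_n))$, is surjective. If $\underline H$ is Mittag-Leffler, then the morphism $\underline f:\underline G\to\underline H$ of \textbf{Tower-Grp} determined by $(f_n)$ is an epimorphism in \textbf{Tower-Grp}.
   Context: A level morphism $(f_n)$ consists of homomorphisms $f_n:G_n\to H_n$ with $f_n\circ p_n=q_n\circ f_{n+1}$ for all $n$. $q_{nm}=q_n\circ\cdots\circ q_{m-1}$; $\underline H$ is Mittag-Leffler if for every $n_0$ there is $n_1>n_0$ with $q_{n_0n}(H_n)=q_{n_0n_1}(H_{n_1})$ for all $n>n_1$. \textbf{Tower-Grp}: objects inverse sequences of groups; morphisms $(f_n,\Phi)$ with $\Phi:\mathbb{N}\to\mathbb{N}$, homomorphisms $f_n:G_{\Phi(n)}\to H_n$ such that for all $n'>n$ there is $m\ge\Phi(n),\Phi(n')$ with $f_n\circ p_{\Phi(n)m}=q_{nn'}\circ f_{n'}\circ p_{\Phi(n')m}$, modulo: $(f_n,\Phi)\sim(g_n,\Psi)$ if every $n$ admits $m\ge\Phi(n),\Psi(n)$ with $f_n\circ p_{\Phi(n)m}=g_n\circ p_{\Psi(n)m}$. An epimorphism is a morphism $u$ with $a\circ u=b\circ u\Rightarrow a=b$. *)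

Set Implicit Arguments.
Unset Strict Implicit.

Record group := Group {
  carrier :> Type;
  gmul : carrier -> carrier -> carrier;
  gone : carrier;
  ginv : carrier -> carrier;
  gmulA : forall x y z, gmul x (gmul y z) = gmul (gmul x y) z;
  gmul1 : forall x, gmul gone x = x;
  gmulV : forall x, gmul (ginv x) x = gone
}.

Definition is_hom (G H : group) (f : G -> H) : Prop :=
  forall x y, f (gmul x y) = gmul (f x) (f y).

Record invseq := InvSeq {
  obj :> nat -> group;
  bond : forall n, obj (S n) -> obj n;
  bond_hom : forall n, is_hom (@bond n)
}.

Definition nat_eq_dec (n m : nat) : {n = m} + {n <> m}.
Proof. decide equality. Defined.

(* p_{nm} : X_m -> X_n, the composite p_n o ... o p_{m-1} (identity if m = n).
   Only meaningful for n <= m; for n > m it returns the unit (junk value,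
   never used in the definitions below). *)
Fixpoint pm (X : invseq) (n m : nat) {struct m} : X m -> X n :=
  match nat_eq_dec m n with
  | left e => fun x => eq_rect m (fun k => carrier (X k)) x n e
  | right _ =>
      match m return X m -> X n with
      | 0 => fun _ => gone (X n)
      | S m' => fun x => @pm X n m' (@bond X m' x)
      end
  end.
Arguments pm X n m _ : clear implicits.
Arguments bond : clear implicits.

Definition mittag_leffler (X : invseq) : Prop :=
  forall n0, exists n1, n0 < n1 /\
    forall n, n1 < n -> forall h : X n0,
      (exists y : X n, pm X n0 n y = h) <-> (exists y : X n1, pm X n0 n1 y = h).

Definition is_level_mor (G H : invseq) (f : forall n, G n -> H n) : Prop :=
  (forall n, is_hom (@f n)) /\
  (forall n (x : G (S n)), f n (bond G n x) = bond H n (f (S n) x)).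

Definition is_thread (X : invseq) (x : forall n, X n) : Prop :=
  forall n, bond X n (x (S n)) = x n.

Definition lim_surjective (G H : invseq) (f : forall n, G n -> H n) : Prop :=
  forall y : forall n, H n, is_thread y ->
    exists x : forall n, G n, is_thread x /\ forall n, f n (x n) = y n.

Record tmor (G H : invseq) := TMor {
  phi : nat -> nat;
  fmap : forall n, G (phi n) -> H n
}.
Arguments phi {G H} t n.
Arguments fmap {G H} t n _.
Arguments TMor {G H} phi fmap.

Definition is_tower_mor (G H : invseq) (u : tmor G H) : Prop :=
  (forall n, is_hom (fmap u n)) /\
  (forall n n', n < n' -> exists m, phi u n <= m /\ phi u n' <= m /\
     forall x : G m,
       fmap u n (pm G (phi u n) m x) = pm H n n' (fmap u n' (pm G (phi u n') m x))).

(* The equivalence relation defining morphisms of Tower-Grp. *)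
Definition tequiv (G H : invseq) (u v : tmor G H) : Prop :=
  forall n, exists m, phi u n <= m /\ phi v n <= m /\
    forall x : G m, fmap u n (pm G (phi u n) m x) = fmap v n (pm G (phi v n) m x).

Definition tcomp (G H K : invseq) (a : tmor H K) (u : tmor G H) : tmor G K :=
  @TMor G K (fun n => phi u (phi a n)) (fun n x => fmap a n (fmap u (phi a n) x)).

(* Epimorphism in Tower-Grp (composition is compatible with tequiv, so this
   is the statement on equivalence classes). *)
Definition tower_epi (G H : invseq) (u : tmor G H) : Prop :=
  forall (K : invseq) (a b : tmor H K), is_tower_mor a -> is_tower_mor b ->
    tequiv (tcomp a u) (tcomp b u) -> tequiv a b.

Definition level_tmor (G H : invseq) (f : forall n, G n -> H n) : tmor G H :=
  @TMor G H (fun n => n) f.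

(** Images in a Mittag-Leffler tower stabilize, so an element of H_m lying in
    the image of every later H_N extends, by dependent choice, to a thread of
    [lim H]; by surjectivity on limits that thread is the image of a thread of
    [lim G].  Hence, far enough up the tower, every element of H_m is of the
    form f_m(x_m).  Two morphisms a, b out of H whose composites with f agree
    at some level m therefore agree on everything coming from beyond the
    stabilization index of m, which is exactly the equality [a = b] in
    Tower-Grp. *)

From Stdlib Require Import Arith Lia Eqdep_dec IndefiniteDescription.
Set Implicit Arguments.

Section BondingMaps.

Variable X : invseq.

Lemma pm_unfold n m (x : X m) : pm X n m x =
  match nat_eq_dec m n with
  | left e => fun x => eq_rect m (fun k => carrier (X k)) x n e
  | right _ =>
      match m return X m -> X n with
      | 0 => fun _ => gone (X n)
      | S m' => fun x => pm X n m' (bond X m' x)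
      end
  end x.
Proof. destruct m; reflexivity. Qed.

Lemma pm_id k (x : X k) : pm X k k x = x.
Proof.
  rewrite pm_unfold; destruct (nat_eq_dec k k) as [e|]; [|congruence].
  now rewrite <- (eq_rect_eq_dec nat_eq_dec).
Qed.

Lemma pm_S k N (x : X (S N)) : k <= N -> pm X k (S N) x = pm X k N (bond X N x).
Proof. intros le_kN; rewrite pm_unfold; destruct (nat_eq_dec (S N) k); [lia | reflexivity]. Qed.

Lemma pm_trans k m N (w : X N) : k <= m -> m <= N ->
  pm X k m (pm X m N w) = pm X k N w.
Proof.
  intros le_km le_mN; induction N as [|N IH].
  - replace m with 0 by lia; now rewrite pm_id.
  - destruct (Nat.eq_dec m (S N)) as [->|ne_mSN]; [now rewrite pm_id|].
    rewrite !pm_S by lia; apply IH; lia.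
Qed.

Lemma bond_pm k N (w : X N) : S k <= N -> bond X k (pm X (S k) N w) = pm X k N w.
Proof.
  intros lt_kN; rewrite <- (@pm_trans k (S k) N) by lia.
  now rewrite pm_S, pm_id by lia.
Qed.

End BondingMaps.

Lemma level_mor_pm (G H : invseq) (f : forall n, G n -> H n) :
  is_level_mor f -> forall k N (x : G N), k <= N -> f k (pm G k N x) = pm H k N (f N x).
Proof.
  intros [_ f_bond] k N x le_kN; induction N as [|N IH].
  - replace k with 0 by lia; now rewrite !pm_id.
  - destruct (Nat.eq_dec k (S N)) as [->|ne_kSN]; [now rewrite !pm_id|].
    rewrite !pm_S, IH, f_bond by lia; reflexivity.
Qed.

Section Threads.

Variable X : invseq.

Lemma thread_through (P : forall k, X k -> Prop) :
  (forall k z, P k z -> exists z' : X (S k), P (S k) z' /\ bond X k z' = z) ->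
  forall m (h : X m), P m h -> exists y : forall n, X n, is_thread y /\ y m = h.
Proof.
  intros lift m h Ph.
  pose (next := fun j (t : {z : X (j + m) | P (j + m) z}) =>
    constructive_indefinite_description _ (lift _ _ (proj2_sig t))).
  pose (T := fix T j : {z : X (j + m) | P (j + m) z} :=
    match j with
    | 0 => exist _ h Ph
    | S j' => exist _ (proj1_sig (next j' (T j'))) (proj1 (proj2_sig (next j' (T j'))))
    end).
  assert (T_bond : forall j, bond X (j + m) (proj1_sig (T (S j))) = proj1_sig (T j)).
  { intros j; exact (proj2 (proj2_sig (next j (T j)))). }
  (* The sequence T lives at levels j + m; pushing it down to level j gives a thread. *)
  exists (fun k => pm X k (k + m) (proj1_sig (T k))); split.
  - intros k; cbv beta.
    rewrite bond_pm by lia.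
    change (S k + m) with (S (k + m)).
    now rewrite pm_S, T_bond by lia.
  - assert (T_base : forall j, pm X m (j + m) (proj1_sig (T j)) = h).
    { induction j as [|j IH]; [apply pm_id|].
      change (S j + m) with (S (j + m)); now rewrite pm_S, T_bond by lia. }
    apply T_base.
Qed.

Definition in_all_images {k} (z : X k) : Prop :=
  forall N, k <= N -> exists w : X N, pm X k N w = z.

Hypothesis ML : mittag_leffler X.

Lemma mittag_leffler_in_all_images k : exists n1, k < n1 /\
  forall N (w : X N), n1 < N -> in_all_images (pm X k N w).
Proof.
  destruct (ML k) as [n1 [lt_kn1 stable]]; exists n1; split; [exact lt_kn1|].
  intros N w lt_n1N N' le_kN'.
  destruct (proj1 (stable N lt_n1N (pm X k N w)) (ex_intro _ w eq_refl)) as [y <-].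
  destruct (Nat.le_gt_cases N' n1) as [le_N'n1|lt_n1N'].
  - exists (pm X N' n1 y); apply pm_trans; lia.
  - apply (proj2 (stable N' lt_n1N' _)); now exists y.
Qed.

Lemma in_all_images_lift k (z : X k) : in_all_images z ->
  exists z' : X (S k), in_all_images z' /\ bond X k z' = z.
Proof.
  intros z_im; destruct (mittag_leffler_in_all_images (S k)) as [n1 [lt_kn1 stable]].
  destruct (z_im (S n1)) as [w <-]; [lia|].
  exists (pm X (S k) (S n1) w); split.
  - apply stable; lia.
  - apply bond_pm; lia.
Qed.

Lemma in_all_images_thread m (h : X m) : in_all_images h ->
  exists y : forall n, X n, is_thread y /\ y m = h.
Proof. apply thread_through, in_all_images_lift. Qed.

End Threads.

Theorem proposition8p14 (G H : invseq) (f : forall n, G n -> H n) :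
  is_level_mor f -> lim_surjective f -> mittag_leffler H ->
  tower_epi (level_tmor f).
Proof.
  intros f_level f_surj ML K a b _ _ ab_eq n.
  destruct (ab_eq n) as [m [le_am [le_bm ab_eq_m]]]; simpl in le_am, le_bm, ab_eq_m.
  destruct (mittag_leffler_in_all_images ML m) as [n1 [lt_mn1 stable]].
  exists (S n1); split; [lia|]; split; [lia|].
  intros y.
  destruct (in_all_images_thread ML (stable (S n1) y ltac:(lia))) as [t [t_thread t_m]].
  destruct (f_surj t t_thread) as [x [_ fx_t]].
  rewrite <- (@pm_trans H (phi a n) m (S n1)), <- (@pm_trans H (phi b n) m (S n1)) by lia.
  rewrite <- t_m, <- fx_t, <- !(level_mor_pm f_level) by lia.
  apply ab_eq_m.
Qed.
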